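(* Let $(E,\mu)$, $(F,\nu)$, $(H,\omega)$ be fuzzy Riesz spaces with $F$ fuzzy Dedekind complete, let $Q:E\rightarrow H$ be a fuzzy lattice homomorphism and $S:H\rightarrow F$ a fuzzy positive linear operator. Then every fuzzy positive linear operator $T:E\rightarrow F$ with $T\le S\circ Q$ admits a factorization $T=S_1\circ Q$, where $S_1:H\rightarrow F$ is linear and $0\le S_1\le S$.
   Context: A fuzzy order on a real vector space $E$ is a map $\mu:E\times E\to[0,1]$ with $\mu(x,x)=1$; $\mu(x,y)+\mu(y,x)>1$ implies $x=y$; and $\mu(x,z)\ge\sup_{y}\min(\mu(x,y),\mu(y,z))$. Write $x\le y$ for $\mu(x,y)>\frac12$; upper bounds, suprema and infima are taken with respect to this relation. $(E,\mu)$ is a fuzzy ordered linear space if $\mu(x_1,x_2)>\frac12$ implies $\mu(x_1,x_2)\le\mu(x_1+x,x_2+x)$ for all $x$ and $\mu(x_1,x_2)\le\mu(\alpha x_1,\alpha x_2)$ for all $\alpha>0$; it is a fuzzy Riesz space if $x\vee y=\sup\{x,y\}$, $x\wedge y=\inf\{x,y\}$ exist for all $x,y$; fuzzy Dedekind complete if every nonempty subset bounded above has a supremum. A linear operator $R$ is fuzzy positive ($0\le R$) if $0\le x$ implies $0\le Rx$; for linear operators $R_1,R_2$ between the same spaces, $R_1\le R_2$ means $R_2-R_1$ is fuzzy positive. A fuzzy lattice homomorphism is a linear map with $Q(x\vee y)=Qx\vee Qy$. *)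

From HB Require Import structures.
From mathcomp Require Import all_boot all_order all_algebra.
From mathcomp Require Import reals.
Set Implicit Arguments. Unset Strict Implicit. Unset Printing Implicit Defensive.
Import Order.TTheory GRing.Theory Num.Theory.
Local Open Scope ring_scope.

Section FuzzyDefs.
Variable R : realType.

(* Fuzzy order mu : E x E -> [0,1].  The transitivity condition
   mu(x,z) >= sup_y min(mu(x,y), mu(y,z)) is written out pointwise in y. *)
Definition fuzzy_order (E : Type) (mu : E -> E -> R) : Prop :=
  [/\ (forall x y, 0 <= mu x y <= 1),
      (forall x, mu x x = 1),
      (forall x y, mu x y + mu y x > 1 -> x = y) &
      (forall x y z, Num.min (mu x y) (mu y z) <= mu x z)].

Definition fle (E : Type) (mu : E -> E -> R) (x y : E) : Prop := 1 / 2 < mu x y.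

Definition fuzzy_ordered_linear (E : lmodType R) (mu : E -> E -> R) : Prop :=
  [/\ fuzzy_order mu,
      (forall x1 x2 x, fle mu x1 x2 -> mu x1 x2 <= mu (x1 + x) (x2 + x)) &
      (forall x1 x2 (a : R), fle mu x1 x2 -> 0 < a -> mu x1 x2 <= mu (a *: x1) (a *: x2))].

Definition is_ub (E : Type) (mu : E -> E -> R) (A : E -> Prop) (u : E) : Prop :=
  forall a, A a -> fle mu a u.
Definition is_lb (E : Type) (mu : E -> E -> R) (A : E -> Prop) (l : E) : Prop :=
  forall a, A a -> fle mu l a.
Definition is_sup (E : Type) (mu : E -> E -> R) (A : E -> Prop) (s : E) : Prop :=
  is_ub mu A s /\ forall u, is_ub mu A u -> fle mu s u.
Definition is_inf (E : Type) (mu : E -> E -> R) (A : E -> Prop) (i : E) : Prop :=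
  is_lb mu A i /\ forall l, is_lb mu A l -> fle mu l i.

Definition pair_set (E : Type) (x y : E) : E -> Prop := fun z => z = x \/ z = y.

Definition fuzzy_riesz (E : lmodType R) (mu : E -> E -> R) : Prop :=
  [/\ fuzzy_ordered_linear mu,
      (forall x y : E, exists s, is_sup mu (pair_set x y) s) &
      (forall x y : E, exists i, is_inf mu (pair_set x y) i)].

Definition fuzzy_dedekind_complete (E : Type) (mu : E -> E -> R) : Prop :=
  forall A : E -> Prop, (exists a, A a) -> (exists u, is_ub mu A u) ->
    exists s, is_sup mu A s.

Definition fpos (E F : lmodType R) (mu : E -> E -> R) (nu : F -> F -> R)
  (T : E -> F) : Prop :=
  forall x, fle mu 0 x -> fle nu 0 (T x).

Definition fop_le (E F : lmodType R) (mu : E -> E -> R) (nu : F -> F -> R)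
  (T1 T2 : E -> F) : Prop :=
  fpos mu nu (fun x => T2 x - T1 x).

(* Q(x v y) = Qx v Qy : Q maps the supremum of {x,y} to the supremum of {Qx,Qy}
   (suprema are unique by antisymmetry of the fuzzy order). *)
Definition fuzzy_lattice_hom (E H : lmodType R) (mu : E -> E -> R)
  (om : H -> H -> R) (Q : E -> H) : Prop :=
  forall x y s, is_sup mu (pair_set x y) s ->
    is_sup om (pair_set (Q x) (Q y)) (Q s).

End FuzzyDefs.

(* The positive part h |-> h v 0 of H is sublinear, so p := S (h v 0) is a
   sublinear map H -> F.  Since Q is a lattice homomorphism, T x <= T (x v 0)
   <= S (Q (x v 0)) = p (Q x), i.e. T is dominated by p on the range of Q.  The
   Hahn-Banach-Kantorovich theorem (one-step extensions, possible because F is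
   Dedekind complete, plus Zorn's lemma) extends T along Q to a linear S1 <= p.
   Finally S1 h <= p h = S h for h >= 0, and - S1 h = S1 (- h) <= p (- h) = 0. *)

From HB Require Import structures.
From mathcomp Require Import all_boot all_order all_algebra.
From mathcomp Require Import reals.
From mathcomp Require Import boolp classical_sets.
From mathcomp Require Import lra.
Set Implicit Arguments. Unset Strict Implicit. Unset Printing Implicit Defensive.
Import Order.TTheory GRing.Theory Num.Theory.
Local Open Scope ring_scope.

Section FuzzyOrderedLinear.
Variables (R : realType) (E : lmodType R) (mu : E -> E -> R).
Hypothesis Hmu : fuzzy_ordered_linear mu.
Local Notation le := (fle mu).

Lemma fle_refl x : le x x.
Proof. by case: Hmu => -[_ mu_refl _ _] _ _; rewrite /fle mu_refl; lra. Qed.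

Lemma fle_trans x y z : le x y -> le y z -> le x z.
Proof.
case: Hmu => -[_ _ _ mu_trans] _ _; rewrite /fle => lexy leyz.
by apply: lt_le_trans (mu_trans x y z); rewrite lt_min lexy leyz.
Qed.

Lemma fle_anti x y : le x y -> le y x -> x = y.
Proof. by case: Hmu => -[_ _ mu_anti _] _ _; rewrite /fle => ? ?; apply: mu_anti; lra. Qed.

Lemma fleD2r z x y : le x y -> le (x + z) (y + z).
Proof. by case: Hmu => _ muD _; rewrite /fle => lexy; apply: lt_le_trans (muD _ _ z lexy). Qed.

Lemma fleZ (a : R) x y : 0 < a -> le x y -> le (a *: x) (a *: y).
Proof.
by case: Hmu => _ _ muZ; rewrite /fle => a0 lexy; apply: lt_le_trans (muZ _ _ a lexy a0).
Qed.

Lemma fleD a b c d : le a b -> le c d -> le (a + c) (b + d).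
Proof.
move=> leab lecd; apply: (fle_trans (y := b + c)); first exact: fleD2r.
by rewrite ![b + _]addrC; apply: fleD2r.
Qed.

Lemma fleBlDr x y z : le (x - y) z <-> le x (z + y).
Proof.
split; first by move=> /(fleD2r y); rewrite subrK.
by move=> /(fleD2r (- y)); rewrite addrK.
Qed.

Lemma fleBrDr x y z : le x (z - y) <-> le (x + y) z.
Proof.
split; first by move=> /(fleD2r y); rewrite subrK.
by move=> /(fleD2r (- y)); rewrite addrK.
Qed.

Lemma fle_subr_ge0 x y : le 0 (y - x) <-> le x y.
Proof.
split=> [|lexy]; first by move=> /(fleD2r x); rewrite add0r subrK.
by rewrite -(subrr x); apply: fleD2r.
Qed.

Lemma fleN2 x y : le x y -> le (- y) (- x).
Proof. by move=> /(fleD2r (- x - y)); rewrite addrA subrr add0r addrCA subrr addr0. Qed.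

Lemma is_sup_unique A s s' : is_sup mu A s -> is_sup mu A s' -> s = s'.
Proof. by move=> [ub_s lub_s] [ub_s' lub_s']; apply: fle_anti; [apply: lub_s | apply: lub_s']. Qed.

Lemma is_sup_pairZ x y s (t : R) : 0 < t ->
  is_sup mu (pair_set x y) s -> is_sup mu (pair_set (t *: x) (t *: y)) (t *: s).
Proof.
move=> t0 [ub_s lub_s]; split.
  by move=> _ [->|->]; apply: fleZ => //; apply: ub_s; [left | right].
have scaleVK z : t *: (t^-1 *: z) = z by rewrite scalerA mulfV ?gt_eqF ?scale1r.
have scaleKV z : t^-1 *: (t *: z) = z by rewrite scalerA mulVf ?gt_eqF ?scale1r.
move=> u ub_u; rewrite -[u]scaleVK; apply: fleZ => //; apply: lub_s => z z_xy.
rewrite -[z]scaleKV; apply: fleZ; first by rewrite invr_gt0.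
by apply: ub_u; case: z_xy => ->; [left | right].
Qed.

End FuzzyOrderedLinear.

Lemma fpos_homo (R : realType) (E F : lmodType R) (mu : E -> E -> R)
    (nu : F -> F -> R) (f : {linear E -> F}) :
  fuzzy_ordered_linear mu -> fuzzy_ordered_linear nu -> fpos mu nu f ->
  forall x y, fle mu x y -> fle nu (f x) (f y).
Proof.
move=> Hmu Hnu fP x y /(fle_subr_ge0 Hmu) /fP.
by rewrite linearB => /(fle_subr_ge0 Hnu).
Qed.

Section PositivePart.
Variables (R : realType) (E : lmodType R) (mu : E -> E -> R).
Hypothesis Hmu : fuzzy_ordered_linear mu.
Local Notation le := (fle mu).
Variable pos : E -> E.
Hypothesis posP : forall x, is_sup mu (pair_set x 0) (pos x).

Lemma pos_ge x : le x (pos x).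
Proof. by apply: (posP x).1; left. Qed.

Lemma pos_ge0 x : le 0 (pos x).
Proof. by apply: (posP x).1; right. Qed.

Lemma pos_id x : le 0 x -> pos x = x.
Proof.
move=> x0; apply: (is_sup_unique Hmu (posP x)); split; last by move=> u; apply; left.
by move=> _ [->|->] //; exact: fle_refl.
Qed.

Lemma posN_eq0 x : le 0 x -> pos (- x) = 0.
Proof.
move=> x0; apply: (is_sup_unique Hmu (posP (- x))); split; last by move=> u; apply; right.
move=> _ [->|->]; last exact: fle_refl.
by rewrite -oppr0; apply: (fleN2 Hmu).
Qed.

Lemma posD x y : le (pos (x + y)) (pos x + pos y).
Proof.
apply: (posP (x + y)).2 => _ [->|->]; first by apply: (fleD Hmu); apply: pos_ge.
by rewrite -(addr0 0); apply: (fleD Hmu); apply: pos_ge0.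
Qed.

Lemma posZ (t : R) x : 0 < t -> pos (t *: x) = t *: pos x.
Proof.
move=> t0; apply: (is_sup_unique Hmu (posP _)).
by have := is_sup_pairZ Hmu t0 (posP x); rewrite scaler0.
Qed.

End PositivePart.

Section HahnBanachKantorovich.
Local Open Scope classical_set_scope.
Variables (R : realType) (H F : lmodType R) (nu : F -> F -> R).
Hypothesis Hnu : fuzzy_ordered_linear nu.
Hypothesis Dnu : fuzzy_dedekind_complete nu.
Local Notation le := (fle nu).
Variable p : H -> F.
Hypothesis pD : forall x y, le (p (x + y)) (p x + p y).
Hypothesis pZ : forall (t : R) x, 0 < t -> p (t *: x) = t *: p x.

(* Graphs of partial linear maps below p; extending a map is enlarging its graph. *)
Definition dominated_subspace (G : set (H * F)) : Prop :=
  [/\ (forall h1 y1 h2 y2, G (h1, y1) -> G (h2, y2) -> G (h1 + h2, y1 + y2)),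
      (forall (a : R) h y, G (h, y) -> G (a *: h, a *: y)) &
      (forall h y, G (h, y) -> le y (p h))].

Definition adjoin (G : set (H * F)) (h : H) (c : F) : set (H * F) :=
  fun q => exists v y (t : R), G (v, y) /\ q = (v + t *: h, y + t *: c).

Lemma sublinear0 : p 0 = 0.
Proof.
have := pZ 0 (ltr0Sn R 1); rewrite scaler0 scaler_nat mulr2n => p0D.
by apply: (@addrI _ (p 0)); rewrite addr0 -p0D.
Qed.

Lemma dominated_subspace_functional G h y1 y2 :
  dominated_subspace G -> G (h, y1) -> G (h, y2) -> y1 = y2.
Proof.
case=> GD GZ Gp Gy1 Gy2.
have Gsub y y' : G (h, y) -> G (h, y') -> le (y - y') 0.
  move=> Gy Gy'; rewrite -sublinear0 -(subrr h).
  by apply: Gp; rewrite -!scaleN1r; apply: GD => //; apply: GZ.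
apply/eqP; rewrite -subr_eq0; apply/eqP; apply: (fle_anti Hnu (Gsub _ _ Gy1 Gy2)).
by rewrite -oppr0 -opprB; apply: fleN2 => //; apply: Gsub.
Qed.

Lemma dominated_subspace_gap G h : dominated_subspace G -> G (0, 0) ->
  exists c, forall w y, G (w, y) ->
    le (y - p (w - h)) c /\ le c (p (w + h) - y).
Proof.
case=> GD _ Gp G00.
pose A z := exists w y, G (w, y) /\ z = y - p (w - h).
have [c [ub_c lub_c]] : exists c, is_sup nu A c.
  apply: Dnu; first by exists (0 - p (0 - h)), 0, 0.
  exists (p h) => _ [w [y [Gy ->]]]; apply/(fleBlDr Hnu).
  apply: (fle_trans Hnu (Gp _ _ Gy)).
  by have := pD (w - h) h; rewrite subrK addrC.
exists c => w y Gy; split; first by apply: ub_c; exists w, y.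
apply: lub_c => _ [w' [y' [Gy' ->]]]; apply/(fleBlDr Hnu).
rewrite addrAC; apply/(fleBrDr Hnu); apply: (fle_trans Hnu (Gp _ _ (GD _ _ _ _ Gy' Gy))).
by rewrite [p (w + h) + _]addrC; have := pD (w' - h) (w + h); rewrite addrACA addNr addr0.
Qed.

Lemma adjoin_dominated G h c : dominated_subspace G ->
  (forall w y, G (w, y) -> le (y - p (w - h)) c /\ le c (p (w + h) - y)) ->
  dominated_subspace (adjoin G h c).
Proof.
case=> GD GZ Gp gap; split.
- move=> _ _ _ _ [v1 [z1 [t1 [G1 [-> ->]]]]] [v2 [z2 [t2 [G2 [-> ->]]]]].
  exists (v1 + v2), (z1 + z2), (t1 + t2); split; first exact: GD.
  by rewrite !scalerDl; congr (_, _); rewrite addrACA.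
- move=> a _ _ [v [z [t [Gvz [-> ->]]]]].
  exists (a *: v), (a *: z), (a * t); split; first exact: GZ.
  by rewrite !scalerDr !scalerA.
move=> _ _ [v [y [t [Gvy [-> ->]]]]].
have scaleVK (s : R) z : 0 < s -> s *: (s^-1 *: z) = z.
  by move=> s0; rewrite scalerA mulfV ?gt_eqF ?scale1r.
(* Scaling the gap inequalities at (v, y) / |t| by |t| gives the bound. *)
case: (ltgtP t 0) => [t0|t0|->]; last by rewrite !scale0r !addr0; apply: Gp.
- have nt0 : 0 < - t by rewrite oppr_gt0.
  have := fleZ Hnu nt0 (gap _ _ (GZ (- t)^-1 _ _ Gvy)).1.
  rewrite scalerBr -pZ // scalerBr !scaleVK // !scaleNr opprK.
  by move=> /(fleBlDr Hnu); rewrite addrC => /(fleBrDr Hnu).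
- have := fleZ Hnu t0 (gap _ _ (GZ t^-1 _ _ Gvy)).2.
  rewrite scalerBr -pZ // scalerDr !scaleVK //.
  by move=> /(fleBrDr Hnu); rewrite addrC.
Qed.

Lemma sub_adjoin G h c : G `<=` adjoin G h c.
Proof. by move=> [v y] Gvy; exists v, y, 0; rewrite !scale0r !addr0. Qed.

Lemma adjoin_gen G h c : G (0, 0) -> adjoin G h c (h, c).
Proof. by move=> G00; exists 0, 0, 1; rewrite !scale1r !add0r. Qed.

Lemma dominated_subspace_bigcup (G0 : set (H * F)) (Gs : set (set (H * F))) :
  dominated_subspace G0 ->
  Gs `<=` (fun G => dominated_subspace (G `|` G0)) -> total_on Gs subset ->
  dominated_subspace ((\bigcup_(G in Gs) G) `|` G0).
Proof.
move=> domG0 domGs Gs_chain; set U := _ `|` G0.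
have sub_U G : Gs G -> G `|` G0 `<=` U by move=> GsG q [Gq|G0q]; [left; exists G | right].
have common q1 q2 : U q1 -> U q2 ->
    exists2 W, dominated_subspace W & [/\ W `<=` U, W q1 & W q2].
  case=> [[G1 GsG1 G1q]|G0q1]; case=> [[G2 GsG2 G2q]|G0q2].
  - have [G12|G21] := Gs_chain _ _ GsG1 GsG2.
      by exists (G2 `|` G0); [apply: domGs | split; [apply: sub_U | left; apply: G12 | left]].
    by exists (G1 `|` G0); [apply: domGs | split; [apply: sub_U | left | left; apply: G21]].
  - by exists (G1 `|` G0); [apply: domGs | split; [apply: sub_U | left | right]].
  - by exists (G2 `|` G0); [apply: domGs | split; [apply: sub_U | right | left]].
  - by exists G0 => //; split => // q G0q; right.
split.
- by move=> ? ? ? ? U1 U2; have [W [WD _ _] [WU W1 W2]] := common _ _ U1 U2; apply/WU/WD.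
- by move=> ? ? ? U1; have [W [_ WZ _] [WU W1 _]] := common _ _ U1 U1; apply/WU/WZ.
- by move=> ? ? U1; have [W [_ _ Wp] [_ W1 _]] := common _ _ U1 U1; apply: Wp.
Qed.

Lemma dominated_extension (E : lmodType R) (Q : {linear E -> H}) (T : {linear E -> F}) :
  (forall x, le (T x) (p (Q x))) ->
  exists S : {linear H -> F}, (forall x, S (Q x) = T x) /\ (forall h, le (S h) (p h)).
Proof.
move=> Tp; pose G0 q := exists x, q = (Q x, T x).
have domG0 : dominated_subspace G0.
  split.
  - by move=> ? ? ? ? [x1 [-> ->]] [x2 [-> ->]]; exists (x1 + x2); rewrite !linearD.
  - by move=> a ? ? [x [-> ->]]; exists (a *: x); rewrite !linearZ.
  - by move=> ? ? [x [-> ->]]; apply: Tp.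
have G000 : G0 (0, 0) by exists 0; rewrite !linear0.
(* Zorn_bigcup also covers the empty chain, hence the union with G0. *)
have [A [domA A_max]] :=
  Zorn_bigcup (P := fun G => dominated_subspace (G `|` G0))
    (fun Gs => dominated_subspace_bigcup (Gs := Gs) domG0).
set G := A `|` G0 in domA.
have G_total h : exists y, G (h, y).
  apply: contrapT => G_h.
  have [c gap] := dominated_subspace_gap h domA (or_intror G000).
  apply: (A_max (adjoin G h c)); last first.
    rewrite setUidl; first exact: adjoin_dominated.
    by move=> q G0q; apply/sub_adjoin; right.
  split; first by move=> q Aq; apply/sub_adjoin; left.
  by move=> adjA; apply: G_h; exists c; left; apply/adjA/adjoin_gen; right.
have [f fP] := choice G_total.
have [GD GZ Gp] := domA.
have f_lin : linear f.
  move=> a u v; apply: (dominated_subspace_functional domA (fP _)).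
  exact: GD (GZ a _ _ (fP u)) (fP v).
pose S : {linear H -> F} := HB.pack f (GRing.isLinear.Build R H F *:%R f f_lin).
exists S; split => [x|h]; last exact: Gp.
by apply: (dominated_subspace_functional domA (fP _)); right; exists x.
Qed.

End HahnBanachKantorovich.

Theorem theorem5p1 (R : realType) (E F H : lmodType R)
  (mu : E -> E -> R) (nu : F -> F -> R) (om : H -> H -> R)
  (Q : {linear E -> H}) (S : {linear H -> F}) (T : {linear E -> F}) :
  fuzzy_riesz mu -> fuzzy_riesz nu -> fuzzy_riesz om ->
  fuzzy_dedekind_complete nu ->
  fuzzy_lattice_hom mu om Q ->
  fpos om nu S ->
  fpos mu nu T ->
  fop_le mu nu T (fun x => S (Q x)) ->
  exists S1 : {linear H -> F},
    (forall x, T x = S1 (Q x)) /\ fpos om nu S1 /\ fop_le om nu S1 S.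
Proof.
move=> [Hmu supE _] [Hnu _ _] [Hom supH _] Dnu Qhom Spos Tpos TSQ.
have [posE posEP] := choice (fun x => supE x 0).
have [pos posP] := choice (fun h => supH h 0).
have S_homo := fpos_homo Hom Hnu Spos.
pose p h := S (pos h).
have pD x y : fle nu (p (x + y)) (p x + p y).
  by rewrite /p -linearD; apply/S_homo/(posD Hom posP).
have pZ t x : 0 < t -> p (t *: x) = t *: p x.
  by move=> t0; rewrite /p -linearZ (posZ Hom posP).
have Tp x : fle nu (T x) (p (Q x)).
  have Q_posE : Q (posE x) = pos (Q x).
    by apply: (is_sup_unique Hom _ (posP _)); rewrite -(linear0 Q); apply: Qhom.
  apply: (fle_trans Hnu (y := T (posE x))).
    exact: (fpos_homo Hmu Hnu Tpos (pos_ge posEP x)).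
  by rewrite /p -Q_posE; apply/(fle_subr_ge0 Hnu)/TSQ/(pos_ge0 posEP).
have [S1 [S1Q S1p]] := dominated_extension Hnu Dnu pD pZ Tp.
exists S1; split=> [x|]; first by rewrite S1Q.
split=> h h0.
- have := S1p (- h); rewrite /p (posN_eq0 Hom posP h0) linear0 linearN.
  by move=> /(fleN2 Hnu); rewrite opprK oppr0.
- by apply/(fle_subr_ge0 Hnu); have := S1p h; rewrite /p (pos_id Hom posP h0).
Qed.
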